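(* There is an absolute constant $c>0$ such that for all integers $n\ge 2$, $1\le k<n$, $d\ge 2k$ and $t\ge1$ with $(d+1)\mid t$, every binary $t\times n$ matrix $M$ that is $d$-runlength constrained and is a (zero-error) QNAGT scheme for $k$ defectives satisfies $$t\ge c\,\frac{d\log(n/k)}{\log(d^2/k)}.$$
   Context: $\log$ denotes the base-2 logarithm. A binary $t\times n$ matrix $M$ is $d$-runlength constrained if in every column, any two $1$'s are separated by a run of at least $d$ zeros, i.e. $M_{ij}=M_{i'j}=1$ with $i<i'$ implies $i'-i\ge d+1$. A vector is $k$-sparse if its Hamming weight is at most $k$. $M$ is a zero-error QNAGT scheme for $k$ defectives if $Mx\ne Mx'$ (real matrix-vector product) for all distinct $k$-sparse $x,x'\in\{0,1\}^n$. *)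

From mathcomp Require Import all_boot all_algebra.
From Stdlib Require Import Reals.

Set Implicit Arguments.
Unset Strict Implicit.
Unset Printing Implicit Defensive.

Definition log2 (x : R) : R := (ln x / ln 2)%R.

Definition ksparse (n k : nat) (x : {ffun 'I_n -> bool}) : bool :=
  (#|[set j | x j]| <= k)%N.

(* Real (integer) matrix-vector product M x for binary M and x; entries are
   nonnegative integers, so computing in nat is exact. *)
Definition mxvec_bin (t n : nat) (M : 'M[bool]_(t, n)) (x : {ffun 'I_n -> bool})
  : {ffun 'I_t -> nat} :=
  [ffun i => (\sum_(j < n) (M i j : nat) * (x j : nat))%N].

Definition runlength_constrained (t n d : nat) (M : 'M[bool]_(t, n)) : Prop :=
  forall (j : 'I_n) (i i' : 'I_t),
    M i j -> M i' j -> (i < i')%N -> (d.+1 <= i' - i)%N.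

Definition QNAGT (t n k : nat) (M : 'M[bool]_(t, n)) : Prop :=
  forall x x' : {ffun 'I_n -> bool},
    ksparse k x -> ksparse k x' -> x != x' -> mxvec_bin M x != mxvec_bin M x'.

From mathcomp Require Import all_boot all_algebra.
From Stdlib Require Import Reals Lra Psatz.
(* Reals rebinds [^] on nat to [Nat.pow]; restore [expn]. *)
From mathcomp Require Import ssrnat.

(* Testing a single defective already forces the columns of M to be distinct.
   Cut the t = m (d + 1) rows into m blocks of d + 1 consecutive rows: the
   runlength constraint leaves at most one 1 per column in each block, so a
   column is determined by an element of {none, 1, ..., d + 1}^m and
   n <= (d + 2)^m.  Hence t = m (d + 1) >= d log n / log (d + 2), and since
   d >= 2k >= 2 gives d^2/k >= 2d >= d + 2 and n/k <= n, this is at least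
   d log(n/k) / log(d^2/k), i.e. the bound holds with c = 1. *)

Set Implicit Arguments.
Unset Strict Implicit.
Unset Printing Implicit Defensive.

Section UnitColumns.
Variables (t n : nat) (M : 'M[bool]_(t, n)).

Definition unit_vec (j : 'I_n) : {ffun 'I_n -> bool} := [ffun l => l == j].

Lemma ksparse_unit_vec k j : 0 < k -> ksparse k (unit_vec j).
Proof.
move=> k_gt0; rewrite /ksparse (_ : [set l | unit_vec j l] = [set j]) ?cards1 //.
by apply/setP => l; rewrite !inE ffunE.
Qed.

Lemma unit_vec_inj : injective unit_vec.
Proof. by move=> j1 j2 /ffunP/(_ j1); rewrite !ffunE eqxx => /esym/eqP. Qed.

Lemma mxvec_bin_unit_vec j : mxvec_bin M (unit_vec j) = [ffun i => nat_of_bool (M i j)].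
Proof.
apply/ffunP => i; rewrite !ffunE (bigD1 j) //= big1 => [|l /negbTE l_neq_j].
  by rewrite ffunE eqxx muln1 addn0.
by rewrite ffunE l_neq_j muln0.
Qed.

Lemma QNAGT_col_inj k : 0 < k -> QNAGT k M -> injective (fun j => col j M).
Proof.
move=> k_gt0 sepM j1 j2 eq_col; apply/eqP; apply: contraT => j1_neq_j2.
have := sepM _ _ (ksparse_unit_vec j1 k_gt0) (ksparse_unit_vec j2 k_gt0).
rewrite (inj_eq unit_vec_inj) j1_neq_j2 !mxvec_bin_unit_vec => /(_ isT)/eqP; case.
apply/ffunP => i; have /matrixP/(_ i ord0) := eq_col.
by rewrite !ffunE !mxE => ->.
Qed.

End UnitColumns.

Section RunlengthBlocks.
Variables (m d n : nat) (M : 'M[bool]_(m * d.+1, n)).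

Lemma block_row_subproof (b : 'I_m) (r : 'I_d.+1) : b * d.+1 + r < m * d.+1.
Proof.
apply: leq_trans (_ : b.+1 * d.+1 <= _); first by rewrite mulSnr ltn_add2l.
by rewrite leq_mul2r ltn_ord orbT.
Qed.

Definition block_row b r : 'I_(m * d.+1) := Ordinal (block_row_subproof b r).

Lemma block_rowP (i : 'I_(m * d.+1)) : exists b r, i = block_row b r.
Proof.
have b_lt : i %/ d.+1 < m by rewrite ltn_divLR.
have r_lt : i %% d.+1 < d.+1 by rewrite ltn_mod.
by exists (Ordinal b_lt), (Ordinal r_lt); apply: val_inj; rewrite /= -divn_eq.
Qed.

Hypothesis runlengthM : runlength_constrained d M.

Lemma runlength_block_uniq b r1 r2 j :
  M (block_row b r1) j -> M (block_row b r2) j -> r1 = r2.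
Proof.
move=> M1 M2; apply: val_inj.
have dist_le (s1 s2 : 'I_d.+1) : M (block_row b s1) j -> M (block_row b s2) j -> s1 < s2 -> False.
  move=> Ms1 Ms2 lt_s12; have := runlengthM Ms1 Ms2; rewrite /= ltn_add2l subnDl.
  move=> /(_ lt_s12); rewrite ltnNge => /negP; apply.
  by rewrite (leq_trans (leq_subr _ _)) // -ltnS.
by case: (ltngtP r1 r2) => // [/(dist_le _ _ M1 M2) | /(dist_le _ _ M2 M1)].
Qed.

Definition block_signature (j : 'I_n) : {ffun 'I_m -> option 'I_d.+1} :=
  [ffun b => [pick r | M (block_row b r) j]].

Lemma block_signature_col j1 j2 :
  block_signature j1 = block_signature j2 -> col j1 M = col j2 M.
Proof.
suff sub_col j j' i : block_signature j = block_signature j' -> M i j -> M i j'.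
  move=> eq_sig; apply/matrixP => i k; rewrite !mxE.
  by apply/idP/idP; apply: sub_col.
move=> /ffunP eq_sig; have [b [r ->]] := block_rowP i; move=> Mj.
have := eq_sig b; rewrite !ffunE.
case: pickP => [r' Mr' | /(_ r)]; last by rewrite Mj.
rewrite (runlength_block_uniq Mr' Mj).
by case: pickP => // r'' Mr'' [->].
Qed.

Lemma runlength_card_le : injective (fun j => col j M) -> n <= d.+2 ^ m.
Proof.
move=> col_inj; have sig_inj : injective block_signature.
  by move=> j1 j2 /block_signature_col; apply: col_inj.
by have := leq_card _ sig_inj; rewrite card_ffun card_option !card_ord.
Qed.

End RunlengthBlocks.

Section Logarithms.
Local Open Scope R_scope.

Lemma ln2_gt0 : 0 < ln 2.
Proof. by have := ln_lt_2; lra. Qed.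

Lemma log2_le x y : 0 < x -> x <= y -> log2 x <= log2 y.
Proof.
move=> x_gt0 [lt_xy | <-]; last exact: Rle_refl.
apply: Rmult_le_compat_r; first by left; apply: Rinv_0_lt_compat; exact: ln2_gt0.
by left; apply: ln_increasing.
Qed.

Lemma log2_gt0 x : 1 < x -> 0 < log2 x.
Proof.
move=> x_gt1; apply: Rdiv_lt_0_compat; last exact: ln2_gt0.
by rewrite -ln_1; apply: ln_increasing; lra.
Qed.

Lemma log2_pow x m : 0 < x -> log2 (x ^ m) = INR m * log2 x.
Proof. by move=> x_gt0; rewrite /log2 ln_pow //; field; have := ln2_gt0; lra. Qed.

Lemma log2_div_le_pow (n k d : R) (m : nat) :
  1 <= k -> 2 * k <= d -> 0 < n -> n <= (d + 2) ^ m ->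
  d * log2 (n / k) / log2 (d ^ 2 / k) <= INR m * (d + 1).
Proof.
move=> k_ge1 kd n_gt0 n_le.
set A := log2 (d ^ 2 / k).
have d_ge2 : 2 <= d by lra.
(* [(d + 2) k <= (d + 2) d / 2 <= d^2] as [d >= 2]. *)
have dk_le : d + 2 <= d ^ 2 / k.
  apply: (Rmult_le_reg_r k); first lra.
  by rewrite /Rdiv Rmult_assoc Rinv_l; nra.
have logd_le : log2 (d + 2) <= A by apply: log2_le; lra.
have A_gt0 : 0 < A by have := @log2_gt0 (d + 2); lra.
have logn_le : log2 (n / k) <= INR m * A.
  have nk_le : n / k <= n.
    apply: (Rmult_le_reg_r k); first lra.
    by rewrite /Rdiv Rmult_assoc Rinv_l; nra.
  have nk_gt0 : 0 < n / k by apply: Rdiv_lt_0_compat; lra.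
  apply: Rle_trans (log2_le nk_gt0 nk_le) _.
  apply: Rle_trans (log2_le n_gt0 n_le) _.
  rewrite log2_pow; last lra.
  by apply: Rmult_le_compat_l logd_le; apply: pos_INR.
have m_ge0 := pos_INR m.
apply: (Rmult_le_reg_r A) => //.
by rewrite /Rdiv Rmult_assoc Rinv_l; nra.
Qed.

Lemma INR_expn a m : INR (a ^ m) = INR a ^ m.
Proof.
elim: m => [|m IHm]; first by rewrite expn0.
by rewrite expnS mult_INR IHm.
Qed.

End Logarithms.

Theorem theorem6 :
  exists c : R, (0 < c)%R /\
    forall (n k d t : nat) (M : 'M[bool]_(t, n)),
      (2 <= n)%N -> (1 <= k)%N -> (k < n)%N -> (2 * k <= d)%N -> (1 <= t)%N ->
      (d.+1 %| t)%N ->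
      runlength_constrained d M -> QNAGT k M ->
      (c * (INR d * log2 (INR n / INR k)) / log2 (INR d ^ 2 / INR k) <= INR t)%R.
Proof.
exists 1%R; split; first exact: Rlt_0_1.
move=> n k d t M n_ge2 k_gt0 _ kd _ /dvdnP[m t_eq] runlengthM sepM; subst t.
have n_le : n <= d.+2 ^ m := runlength_card_le runlengthM (QNAGT_col_inj k_gt0 sepM).
rewrite Rmult_1_l mult_INR S_INR.
apply: log2_div_le_pow.
- by apply: (le_INR 1); apply/leP.
- by rewrite -[2%R]/(INR 2) -mult_INR; apply: le_INR; apply/leP.
- by apply: lt_0_INR; apply/ltP; apply: leq_trans n_ge2.
- have -> : (INR d + 2)%R = INR d.+2 by rewrite !S_INR; lra.
  by rewrite -INR_expn; apply: le_INR; apply/leP.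
Qed.
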